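(* For proposition letters $p,o,r,q$, the formula $\mathcal{K}hm(p,o,r)\wedge\mathcal{K}hm(r,o,q)\wedge\mathcal{U}(r\to o)\to\mathcal{K}hm(p,o,q)$ is valid, i.e., true at every state of every model.
   Context: Fix a countable set of proposition letters $\mathbf{P}$ and a countable non-empty set of action symbols $\Sigma$. Formulas: $\phi ::= p \mid \neg\phi \mid (\phi\wedge\phi) \mid \mathcal{K}hm(\phi,\phi,\phi)$; $\top,\bot,\to$ as usual; $\mathcal{U}\phi$ abbreviates $\mathcal{K}hm(\neg\phi,\top,\bot)$. A model is $(S,\mathcal{R},\mathcal{V})$ with $S\neq\emptyset$, $\mathcal{R}:\Sigma\to 2^{S\times S}$, $\mathcal{V}:S\to 2^{\mathbf{P}}$. For $\sigma=a_1\cdots a_n\in\Sigma^*$, $s\xrightarrow{\sigma}t$ means there is a path $s\xrightarrow{a_1}\cdots\xrightarrow{a_n}t$ ($s\xrightarrow{\epsilon}s$ for the empty sequence); $\sigma_k=a_1\cdots a_k$, $\sigma_0=\epsilon$. $\sigma$ is strongly $\chi$-executable at $s'$ if for each $0\le k<n$, every $t$ with $s'\xrightarrow{\sigma_k}t$ has an $a_{k+1}$-successor, and every $t$ with $s'\xrightarrow{\sigma_k}t$ for $0<k<n$ satisfies $\chi$. $\mathcal{M},s\vDash\mathcal{K}hm(\psi,\chi,\phi)$ iff there is $\sigma\in\Sigma^*$ such that for every $s'$ with $\mathcal{M},s'\vDash\psi$, $\sigma$ is strongly $\chi$-executable at $s'$ and $\mathcal{M},t\vDash\phi$ for all $t$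 with $s'\xrightarrow{\sigma}t$; atoms and Booleans are interpreted as usual ($\mathcal{M},s\vDash p$ iff $p\in\mathcal{V}(s)$). Consequently $\mathcal{M},s\vDash\mathcal{U}\phi$ iff $\phi$ holds at all states of $\mathcal{M}$. *)

From Stdlib Require Import List.
Import ListNotations.

Definition prop_letter := nat.

Inductive form (Sigma : Type) : Type :=
| Var : prop_letter -> form Sigma
| Neg : form Sigma -> form Sigma
| And : form Sigma -> form Sigma -> form Sigma
| Khm : form Sigma -> form Sigma -> form Sigma -> form Sigma.

Arguments Var {Sigma} _.
Arguments Neg {Sigma} _.
Arguments And {Sigma} _ _.
Arguments Khm {Sigma} _ _ _.

Definition Top {Sigma} : form Sigma := Neg (And (Var 0) (Neg (Var 0))).
Definition Bot {Sigma} : form Sigma := Neg Top.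
Definition Or {Sigma} (a b : form Sigma) : form Sigma := Neg (And (Neg a) (Neg b)).
Definition Imp {Sigma} (a b : form Sigma) : form Sigma := Neg (And a (Neg b)).
Definition Univ {Sigma} (a : form Sigma) : form Sigma := Khm (Neg a) Top Bot.

Record model (Sigma : Type) : Type := {
  St : Type;
  st_inhabited : inhabited St;
  Rel : Sigma -> St -> St -> Prop;
  Val : St -> prop_letter -> Prop
}.
Arguments St {Sigma} _.
Arguments Rel {Sigma} _ _ _ _.
Arguments Val {Sigma} _ _ _.

Fixpoint path {Sigma} (M : model Sigma) (sg : list Sigma) (s t : St M) : Prop :=
  match sg with
  | [] => s = t
  | a :: sg' => exists u, Rel M a s u /\ path M sg' u t
  end.

(* sigma_k = firstn k sigma. Strong chi-executability, with chi given
   semantically as a predicate on states. *)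
Definition strongly_exec {Sigma} (M : model Sigma) (chi : St M -> Prop)
    (sg : list Sigma) (s : St M) : Prop :=
  forall k, k < length sg ->
    forall t, path M (firstn k sg) s t ->
      (forall a, nth_error sg k = Some a -> exists u, Rel M a t u) /\
      (0 < k -> chi t).

Fixpoint sat {Sigma} (M : model Sigma) (s : St M) (f : form Sigma) : Prop :=
  match f with
  | Var p => Val M s p
  | Neg g => ~ sat M s g
  | And g h => sat M s g /\ sat M s h
  | Khm psi chi phi =>
      exists sg : list Sigma,
        forall s', sat M s' psi ->
          strongly_exec M (fun t => sat M t chi) sg s' /\
          (forall t, path M sg s' t -> sat M t phi)
  end.

Definition countable (T : Type) : Prop :=
  exists f : T -> nat, forall x y, f x = f y -> x = y.

Definition valid {Sigma} (f : form Sigma) : Prop :=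
  forall (M : model Sigma) (s : St M), sat M s f.

(* The universal modality U(r -> o) says that every r-state is an o-state: a
   state refuting r -> o would have to execute some plan ending only in
   bottom-states, which is impossible since executable plans have endpoints.
   A witness plan for Khm(p,o,q) is then the concatenation of the witnesses
   for Khm(p,o,r) and Khm(r,o,q); the junction states are r-states, so they
   satisfy the intermediate constraint o. *)
From Stdlib Require Import List Arith Lia Classical.
Import ListNotations.

Section Paths.

Context {Sigma : Type} (M : model Sigma).

Lemma path_app (l1 l2 : list Sigma) (s u : St M) :
  path M (l1 ++ l2) s u <-> exists t, path M l1 s t /\ path M l2 t u.
Proof.
  revert s; induction l1 as [|a l1 IH]; intros s; simpl.
  - split; [intros H; exists s; auto | intros [t [-> H]]; exact H].
  - split.
    + intros [v [Hav Hv]]. apply IH in Hv as [t [H1 H2]]. eauto.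
    + intros [t [[v [Hav H1]] H2]]. exists v. split; [exact Hav|]. apply IH; eauto.
Qed.

Lemma strongly_exec_cons_inv (chi : St M -> Prop) (a : Sigma) (sg : list Sigma)
    (s : St M) :
  strongly_exec M chi (a :: sg) s ->
  (exists u, Rel M a s u) /\ (forall u, Rel M a s u -> strongly_exec M chi sg u).
Proof.
  intros He. split.
  - destruct (He 0 ltac:(simpl; lia) s eq_refl) as [Hsucc _]. exact (Hsucc a eq_refl).
  - intros u Hau k Hk t Ht.
    destruct (He (S k) ltac:(simpl; lia) t ltac:(exists u; auto)) as [Hsucc Hchi].
    split; [exact Hsucc | intros _; apply Hchi; lia].
Qed.

Lemma strongly_exec_path (chi : St M -> Prop) (sg : list Sigma) (s : St M) :
  strongly_exec M chi sg s -> exists t, path M sg s t.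
Proof.
  revert s; induction sg as [|a sg IH]; intros s He.
  - exists s. reflexivity.
  - destruct (strongly_exec_cons_inv chi a sg s He) as [[u Hau] Htail].
    destruct (IH u (Htail u Hau)) as [t Hut].
    exists t, u. auto.
Qed.

Lemma strongly_exec_app (chi : St M -> Prop) (l1 l2 : list Sigma) (s : St M) :
  strongly_exec M chi l1 s ->
  (forall t, path M l1 s t -> strongly_exec M chi l2 t /\ (0 < length l1 -> chi t)) ->
  strongly_exec M chi (l1 ++ l2) s.
Proof.
  intros He1 Hmid k Hk t Ht.
  rewrite length_app in Hk. rewrite firstn_app in Ht.
  destruct (lt_dec k (length l1)) as [Hlt | Hge].
  - replace (k - length l1) with 0 in Ht by lia.
    rewrite app_nil_r in Ht. rewrite nth_error_app1 by exact Hlt.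
    exact (He1 k Hlt t Ht).
  - rewrite firstn_all2 in Ht by lia.
    apply path_app in Ht as [m [Hm1 Hm2]].
    destruct (Hmid m Hm1) as [He2 Hchi_m].
    destruct (He2 (k - length l1) ltac:(lia) t Hm2) as [Hsucc Hchi].
    rewrite nth_error_app2 by lia. split; [exact Hsucc|].
    intros Hk0. destruct (k - length l1) as [|j] eqn:Ej.
    + simpl in Hm2. subst t. apply Hchi_m. lia.
    + apply Hchi. lia.
Qed.

End Paths.

Lemma sat_Univ {Sigma} (M : model Sigma) (s : St M) (phi : form Sigma) :
  sat M s (Univ phi) <-> forall t, sat M t phi.
Proof.
  simpl. split.
  - intros [sg Hsg] t. apply NNPP. intros Hnphi.
    destruct (Hsg t Hnphi) as [He Hend].
    destruct (strongly_exec_path M _ sg t He) as [u Hu].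
    apply (Hend u Hu). intros [Hv Hnv]. exact (Hnv Hv).
  - intros Hphi. exists []. intros t Hnphi. contradiction (Hnphi (Hphi t)).
Qed.

Lemma sat_Khm_trans {Sigma} (M : model Sigma) (s : St M)
    (psi chi phi1 phi2 : form Sigma) :
  (forall t, sat M t phi1 -> sat M t chi) ->
  sat M s (Khm psi chi phi1) -> sat M s (Khm phi1 chi phi2) ->
  sat M s (Khm psi chi phi2).
Proof.
  simpl. intros Hchi [l1 H1] [l2 H2]. exists (l1 ++ l2). intros s' Hpsi.
  destruct (H1 s' Hpsi) as [He1 Hend1]. split.
  - apply strongly_exec_app; [exact He1|].
    intros t Ht. split; [apply H2, Hend1, Ht | intros _; apply Hchi, Hend1, Ht].
  - intros u Hu. apply path_app in Hu as [t [Ht Htu]].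
    exact (proj2 (H2 t (Hend1 t Ht)) u Htu).
Qed.

Theorem mainTheorem4 (Sigma : Type) (HSne : inhabited Sigma)
  (HSc : countable Sigma) (p o r q : prop_letter) :
  @valid Sigma (Imp (And (And (Khm (Var p) (Var o) (Var r))
                       (Khm (Var r) (Var o) (Var q)))
                  (Univ (Imp (Var r) (Var o))))
             (Khm (Var p) (Var o) (Var q))).
Proof.
  intros M s [[[Hpr Hrq] HU] Hnot]. apply Hnot.
  assert (Hro : forall t, sat M t (Var r) -> sat M t (Var o)).
  { intros t Hr. apply NNPP. intros Ho.
    exact (proj1 (sat_Univ M s _) HU t (conj Hr Ho)). }
  exact (sat_Khm_trans M s (Var p) (Var o) (Var r) (Var q) Hro Hpr Hrq).
Qed.
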